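(* Let $\gamma>0$ and let $\mathcal Q$ be a collection of probability measures on $\{0,1\}^{\mathbb N}$ such that $\mathrm{Mean}(\mathcal Q)$ has no countable $3\gamma$-cover. Then there exist a coordinate $i\in\mathbb N$, a value $r_i\in(0,1)$, and subcollections $\mathcal Q_1,\mathcal Q_2\subseteq\mathcal Q$ such that neither $\mathrm{Mean}(\mathcal Q_1)$ nor $\mathrm{Mean}(\mathcal Q_2)$ has a countable $3\gamma$-cover, every $q\in\mathrm{Mean}(\mathcal Q_1)$ satisfies $q_i\ge r_i+\gamma$, and every $q\in\mathrm{Mean}(\mathcal Q_2)$ satisfies $q_i\le r_i-\gamma$.
   Context: For a probability measure $\mu$ on $\{0,1\}^{\mathbb N}$, $\mathrm{Mean}(\mu)\in[0,1]^{\mathbb N}$ is the vector whose $j$-th coordinate is $\mathbb E[X_j]$ for $X\sim\mu$; $\mathrm{Mean}(\mathcal Q)=\{\mathrm{Mean}(\mu):\mu\in\mathcal Q\}$. For $\varepsilon>0$, a countable $\varepsilon$-cover of $\mathrm{Mean}(\mathcal Q)$ is a countable set $C\subset[0,1]^{\mathbb N}$ such that every $q\in\mathrm{Mean}(\mathcal Q)$ has some $p\in C$ with $\|q-p\|_\infty<\varepsilon$. *)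

From HB Require Import structures.
From mathcomp Require Import all_boot all_order all_algebra.
From mathcomp Require Import all_classical all_reals all_analysis.
Set Implicit Arguments. Unset Strict Implicit. Unset Printing Implicit Defensive.
Import Order.TTheory GRing.Theory Num.Theory.
Local Open Scope classical_set_scope.
Local Open Scope ring_scope.

(* {0,1}^N is modelled as nat -> bool, with the product sigma-algebra,
   i.e. the sigma-algebra generated by the coordinate events {x | x j = 1}. *)
Definition coord_events : set (set (nat -> bool)) :=
  [set A | exists j : nat, A = [set x : nat -> bool | x j = true]].

Definition bitseq_space := g_sigma_algebraType coord_events.

Definition Mean (R : realType) (mu : probability bitseq_space R) : nat -> R :=
  fun j => fine (\int[mu]_x (((x : nat -> bool) j)%:R : R)%:E)%E.

Definition MeanSet (R : realType) (Q : set (probability bitseq_space R))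
  : set (nat -> R) := Mean (R:=R) @` Q.

Definition sup_dist (R : realType) (q p : nat -> R) : \bar R :=
  ereal_sup (range (fun j => (`|q j - p j|)%:E)).

Definition has_countable_cover (R : realType) (eps : R) (A : set (nat -> R)) : Prop :=
  exists C : set (nat -> R),
    countable C /\
    (forall p, C p -> forall j, 0 <= p j <= 1) /\
    (forall q, A q -> exists2 p, C p & (sup_dist q p < eps%:E)%E).

From HB Require Import structures.
From mathcomp Require Import all_boot all_order all_algebra.
From mathcomp Require Import all_classical all_reals all_analysis.
From mathcomp Require Import ring lra.
Import Order.TTheory GRing.Theory Num.Theory.
Local Open Scope classical_set_scope.
Local Open Scope ring_scope.

Set Implicit Arguments.
Unset Strict Implicit.
Unset Printing Implicit Defensive.

(* Suppose no coordinate splits A.  For each coordinate i let c_i be the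
   critical level: the supremum of the t for which {q in A | t <= q_i} has no
   countable cover.  The slab {q_i >= c_i + gamma} is then coverable, and
   splitting at r = c_i - 3 gamma / 2 must fail, whose upper half
   {q_i >= c_i - gamma / 2} is uncoverable, so the slab {q_i <= c_i - 5 gamma / 2}
   is coverable.  What remains after removing these countably many slabs lies
   within 5 gamma / 2 < 3 gamma of the single point c, so A itself would be
   countably coverable. *)

Definition upper_part (R : realType) (A : set (nat -> R)) i (t : R) :=
  A `&` [set q | t <= q i].
Definition lower_part (R : realType) (A : set (nat -> R)) i (t : R) :=
  A `&` [set q | q i <= t].

Section CountableCover.
Variables (R : realType) (eps : R).
Implicit Types A B : set (nat -> R).

Local Notation coverable := (has_countable_cover eps).

Lemma has_countable_cover_sub A B : A `<=` B -> coverable B -> coverable A.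
Proof. by move=> AB [C [cC [C01 HC]]]; exists C; do 2 split => //; move=> q /AB/HC. Qed.

Lemma has_countable_cover0 : coverable set0.
Proof. by exists set0. Qed.

Lemma has_countable_cover_bigcup (I : countType) (F : I -> set (nat -> R)) :
  (forall i, coverable (F i)) -> coverable (\bigcup_i F i).
Proof.
move=> /choice[C HC]; exists (\bigcup_i C i); split.
  by apply: bigcup_countable => // i _; case: (HC i).
split; first by move=> p [i _ Cip]; case: (HC i) => _ [+ _]; apply.
move=> q [i _ /(proj2 (proj2 (HC i)))[p Cip qp]].
by exists p => //; exists i.
Qed.

Lemma has_countable_coverU A B : coverable A -> coverable B -> coverable (A `|` B).
Proof.
move=> cA cB; rewrite -bigcup2E; apply: has_countable_cover_bigcup.
by case=> [|[|n]] //=; exact: has_countable_cover0.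
Qed.

Lemma has_countable_cover_near A (c : nat -> R) (b : R) :
  (forall j, 0 <= c j <= 1) -> b < eps ->
  (forall q, A q -> forall j, `|q j - c j| <= b) -> coverable A.
Proof.
move=> c01 b_lt Hb; exists [set c]; split; first exact: countable1.
split; first by move=> p ->.
move=> q Aq; exists c => //; apply: (@le_lt_trans _ _ b%:E); last by rewrite lte_fin.
by apply: ge_ereal_sup => _ [j _ <-]; rewrite lee_fin; exact: Hb.
Qed.

(* Whatever escapes the box (c - a, c + b) in some coordinate lies in one of
   countably many slabs; what stays inside lies within max(a, b) of c. *)
Lemma has_countable_cover_slabs A (c : nat -> R) (a b : R) :
  (forall j, 0 <= c j <= 1) -> a < eps -> b < eps ->
  (forall i, coverable (upper_part A i (c i + b))) ->
  (forall i, coverable (lower_part A i (c i - a))) -> coverable A.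
Proof.
move=> c01 a_lt b_lt up_cov low_cov.
pose box := A `&` [set q | forall i, c i - a < q i < c i + b].
have A_split : A `<=` box `|` \bigcup_i (upper_part A i (c i + b) `|` lower_part A i (c i - a)).
  move=> q Aq; have [q_box|/existsNP[i qi]] := pselect (forall i, c i - a < q i < c i + b).
    by left.
  right; exists i => //; case: (lerP (c i + b) (q i)) => [q_up|q_lt].
    by left.
  by right; split => //=; rewrite leNgt; apply: contra_notN qi => ->.
apply: has_countable_cover_sub A_split _; apply: has_countable_coverU.
  apply: (has_countable_cover_near (b := Num.max a b)) c01 _ _.
    by rewrite gt_max a_lt b_lt.
  move=> q [_ q_box] j; case/andP: (q_box j) => q_lo q_hi.
  have a_max : a <= Num.max a b by rewrite le_max lexx.
  have b_max : b <= Num.max a b by rewrite le_max lexx orbT.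
  move: (Num.max a b) a_max b_max => m a_m b_m.
  by rewrite ler_norml; apply/andP; split; lra.
by apply: has_countable_cover_bigcup => i; apply: has_countable_coverU.
Qed.

End CountableCover.

Section CriticalLevel.
Variables (R : realType) (eps : R) (A : set (nat -> R)).
Hypothesis A01 : forall q, A q -> forall j, 0 <= q j <= 1.
Hypothesis A_uncoverable : ~ has_countable_cover eps A.

Local Notation coverable := (has_countable_cover eps).

Definition uncoverable_levels i : set R := [set t | ~ coverable (upper_part A i t)].

Definition critical_level i : R := sup (uncoverable_levels i).

Lemma uncoverable_level0 i : uncoverable_levels i 0.
Proof.
move=> cov0; apply: A_uncoverable; apply: has_countable_cover_sub cov0.
by move=> q Aq; split => //; case/andP: (A01 Aq i).
Qed.

Lemma uncoverable_levels_ub i : ubound (uncoverable_levels i) 1.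
Proof.
move=> t ncov; rewrite leNgt; apply/negP => t_gt1; apply: ncov.
apply: has_countable_cover_sub (has_countable_cover0 _) => q [Aq tq].
by case/andP: (A01 Aq i) => _ q1; have := le_trans tq q1; rewrite leNgt t_gt1.
Qed.

Lemma has_sup_uncoverable_levels i : has_sup (uncoverable_levels i).
Proof. by split; [exists 0; exact: uncoverable_level0 | exists 1; exact: uncoverable_levels_ub]. Qed.

Lemma critical_level01 i : 0 <= critical_level i <= 1.
Proof.
apply/andP; split.
  exact: sup_upper_bound (has_sup_uncoverable_levels i) _ (@uncoverable_level0 i).
by apply: ge_sup; [exists 0; exact: uncoverable_level0 | exact: uncoverable_levels_ub].
Qed.

Lemma coverable_upper_part i t : critical_level i < t -> coverable (upper_part A i t).
Proof.
move=> ct; apply: contrapT => ncov.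
by have := sup_upper_bound (has_sup_uncoverable_levels i) ncov; rewrite leNgt ct.
Qed.

Lemma uncoverable_upper_part i t : t < critical_level i -> ~ coverable (upper_part A i t).
Proof.
move=> tc cov; rewrite -subr_gt0 in tc.
have [s ncov_s /ltW lt_s] := sup_adherent tc (has_sup_uncoverable_levels i).
rewrite opprB addrCA subrr addr0 in lt_s.
apply: ncov_s; apply: has_countable_cover_sub cov => q [Aq sq].
by split => //; exact: le_trans sq.
Qed.

End CriticalLevel.

Lemma measurable_coord (j : nat) :
  measurable ([set x | x j = true] : set bitseq_space).
Proof. by apply: sub_gen_smallest; exists j. Qed.

Lemma Mean_coordE (R : realType) (mu : probability bitseq_space R) j :
  Mean mu j = fine (mu [set x | x j = true]).
Proof.
rewrite /Mean -[X in mu X]setIT -integral_indic //; last exact: measurable_coord.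
congr (fine (integral _ _ _)); apply/funext => x; rewrite indicE.
by case xj: (x j); [rewrite mem_set | rewrite memNset //= xj].
Qed.

Lemma Mean01 (R : realType) (mu : probability bitseq_space R) j :
  0 <= Mean mu j <= 1.
Proof.
rewrite Mean_coordE fine_ge0 ?measure_ge0 //=.
have mu_le1 := probability_le1 mu (measurable_coord j).
by rewrite -lee_fin fineK // ge0_fin_numE ?measure_ge0 // (le_lt_trans mu_le1) ?ltry.
Qed.

Lemma MeanSet01 (R : realType) (Q : set (probability bitseq_space R)) q :
  MeanSet Q q -> forall j, 0 <= q j <= 1.
Proof. by move=> [mu _ <-]; exact: Mean01. Qed.

Lemma MeanSet_setI_preimage (R : realType) (Q : set (probability bitseq_space R))
    (S : set (nat -> R)) :
  MeanSet (Q `&` @Mean R @^-1` S) = MeanSet Q `&` S.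
Proof.
apply/seteqP; split; first by move=> _ [mu [Qmu Smu] <-]; split => //; exists mu.
by move=> _ [[mu Qmu <-] Smu]; exists mu.
Qed.

Lemma uncoverable_split (R : realType) (gamma : R) (A : set (nat -> R)) :
  0 < gamma -> (forall q, A q -> forall j, 0 <= q j <= 1) ->
  ~ has_countable_cover (3 * gamma) A ->
  exists i (r : R), 0 < r < 1 /\
    ~ has_countable_cover (3 * gamma) (upper_part A i (r + gamma)) /\
    ~ has_countable_cover (3 * gamma) (lower_part A i (r - gamma)).
Proof.
move=> gamma_gt0 A01 A_unc; apply: contrapT => no_split.
pose c := critical_level (3 * gamma) A.
(* Splitting at r = c i - 3 gamma / 2 fails, and its upper half lies below c i. *)
have low_cov i : has_countable_cover (3 * gamma) (lower_part A i (c i - 5 * gamma / 2)).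
  case/andP: (critical_level01 A01 A_unc i) => _; rewrite -/(c i) => c1.
  case: (lerP (c i - 3 * gamma / 2) 0) => [r_le0|r_gt0].
    apply: has_countable_cover_sub (has_countable_cover0 _) => q [Aq /= q_lo].
    case/andP: (A01 _ Aq i) => q0 _.
    suff : q i < 0 by rewrite ltNge q0.
    lra.
  apply: contrapT => low_unc; apply: no_split; exists i, (c i - 3 * gamma / 2).
  split; first by apply/andP; split => //; lra.
  split; last by have -> : c i - 3 * gamma / 2 - gamma = c i - 5 * gamma / 2 by lra.
  by apply: (uncoverable_upper_part A01 A_unc); rewrite -/(c i); lra.
apply: (A_unc); apply: (has_countable_cover_slabs (a := 5 * gamma / 2) (b := gamma)
  (critical_level01 A01 A_unc) _ _ _ low_cov).
- lra.
- lra.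
- by move=> i; apply: (coverable_upper_part A01 A_unc); rewrite ltrDl.
Qed.

Theorem mainTheorem11 (R : realType) (gamma : R)
  (Q : set (probability bitseq_space R)) :
  0 < gamma ->
  ~ has_countable_cover (3 * gamma) (MeanSet Q) ->
  exists (i : nat) (r : R) (Q1 Q2 : set (probability bitseq_space R)),
    0 < r < 1 /\ Q1 `<=` Q /\ Q2 `<=` Q /\
    ~ has_countable_cover (3 * gamma) (MeanSet Q1) /\
    ~ has_countable_cover (3 * gamma) (MeanSet Q2) /\
    (forall q, MeanSet Q1 q -> r + gamma <= q i) /\
    (forall q, MeanSet Q2 q -> q i <= r - gamma).
Proof.
move=> gamma_gt0 Q_unc.
have [i [r [r01 [up_unc low_unc]]]] :=
  uncoverable_split gamma_gt0 (@MeanSet01 R Q) Q_unc.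
exists i, r, (Q `&` @Mean R @^-1` [set q | r + gamma <= q i]),
  (Q `&` @Mean R @^-1` [set q | q i <= r - gamma]).
rewrite !MeanSet_setI_preimage.
split => //; split; first exact: subIsetl.
split; first exact: subIsetl.
by do 2 split => //; split => q [].
Qed.
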